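(* Let $m\ge 4$ and let $K\ne\Delta_{[m]}$ be a simplicial complex on $[m]$ with $f_0(K)=f_0(K^\vee)=m$. If $\chi(\mathrm{Bier}(K))=m-1$, then $\mathrm{Bier}(K)$ is a weak suspension.
   Context: A simplicial complex $K$ on $[m]=\{1,\dots,m\}$ is a nonempty family of subsets of $[m]$ closed under taking subsets; $V(K)=\{i:\{i\}\in K\}$, $f_0(K)=|V(K)|$. $\Delta_{[m]}=2^{[m]}$. Let $[m']=\{1',\dots,m'\}$ be a disjoint copy of $[m]$, $I'=\{i':i\in I\}$. For $K\ne\Delta_{[m]}$ the Alexander dual $K^\vee$ is the complex on $[m']$ with $J'\in K^\vee$ iff $[m]\setminus J\notin K$. The Bier sphere $\mathrm{Bier}(K)$ is the complex on $[m]\sqcup[m']$ with faces $I\sqcup J'$, $I\in K$, $J'\in K^\vee$, $I\cap J=\varnothing$. The chromatic number $\chi(L)$ is the least number of colors in a map $c\colon V(L)\to C$ with $c(u)\ne c(v)$ whenever $\{u,v\}\in L$. A complex $L$ is a weak suspension if there exist distinct $a,b\in V(L)$ with $\{a,b\}\notin L$ such that each of $a,b$ forms an edge of $L$ with every vertex of $V(L)\setminus\{a,b\}$. *)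

From mathcomp Require Import all_boot.
Set Implicit Arguments. Unset Strict Implicit. Unset Printing Implicit Defensive.

Section Complexes.
Variable T : finType.

Definition is_complex (K : {set {set T}}) : Prop :=
  K != set0 /\ forall I J : {set T}, I \in K -> J \subset I -> J \in K.

Definition vertices (L : {set {set T}}) : {set T} := [set v | [set v] \in L].

Definition f0 (L : {set {set T}}) : nat := #|vertices L|.

(* proper colorings with colors 'I_k, defined on V(L) (encoded with option,
   None off V(L)) *)
Definition colorable (L : {set {set T}}) (k : nat) : bool :=
  [exists c : {ffun T -> option 'I_k},
     [forall v, (v \in vertices L) ==> (c v != None)] &&
     [forall u, forall v,
        [&& u \in vertices L, v \in vertices L, u != v & [set u; v] \in L]
        ==> (c u != c v)]].

(* least k with a proper k-coloring; #|T| colors always suffice *)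
Definition chromatic_number (L : {set {set T}}) : nat :=
  find (colorable L) (iota 0 #|T|.+1).

Definition weak_suspension (L : {set {set T}}) : Prop :=
  exists a b : T,
    [/\ a \in vertices L, b \in vertices L, a != b, [set a; b] \notin L &
      forall v, v \in vertices L -> v != a -> v != b ->
        [set a; v] \in L /\ [set b; v] \in L].
End Complexes.

Definition full_simplex (m : nat) : {set {set 'I_m}} := setT.

(* Alexander dual, on the copy [m'] (represented again by 'I_m):
   J' in K^vee iff [m] \ J notin K. *)
Definition alex_dual (m : nat) (K : {set {set 'I_m}}) : {set {set 'I_m}} :=
  [set J | ~: J \notin K].

(* Bier sphere on [m] ⊔ [m'] = 'I_m + 'I_m (inl = unprimed, inr = primed). *)
Definition bier (m : nat) (K : {set {set 'I_m}}) : {set {set ('I_m + 'I_m)%type}} :=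
  [set (inl @: I) :|: (inr @: J) | I : {set 'I_m} in K, J : {set 'I_m} in alex_dual K
      & [disjoint I & J]].

(* A proper (m-1)-coloring c of Bier(K) restricts to colorings cL, cR of [m] and [m'].
   Since {i, j'} is an edge for i <> j, cL i = cR j forces i = j; a cL-monochromatic pair
   is a non-face of K and a cR-monochromatic pair has its complement in K, so any two such
   pairs meet. Counting the m-1 colors then shows that cL and cR are both constant on some
   three indices x, y, z. For i outside {x, y, z} every pair {i, j} misses one of the pairs
   among x, y, z, hence lies both in K and in K^vee: i and i' are joined to every other
   vertex, while {i, i'} is never a face. *)

From mathcomp Require Import all_boot zify.
Set Implicit Arguments. Unset Strict Implicit. Unset Printing Implicit Defensive.

Section ImageCounting.
Variables (T T' : finType) (f : T -> T').

Lemma exists_collision (A : {set T}) :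
  #|f @: A| < #|A| -> exists x y, [/\ x \in A, y \in A, x != y & f x = f y].
Proof.
move=> ltAf; have /dinjectivePn[x Ax [y]] : ~~ dinjectiveb f A.
  by apply: contraTN ltAf => /dinjectiveP/card_in_imset->; rewrite ltnn.
by rewrite !inE => /andP[nyx Ay] fxy; exists x, y; rewrite eq_sym.
Qed.

Lemma card_le_imset_add2 (A : {set T}) x y :
  {in ~: [set x; y] &, injective f} -> #|A| <= #|f @: A| + 2.
Proof.
move=> injf; rewrite -(cardsID [set x; y] A) addnC leq_add //.
  rewrite -(card_in_imset (sub_in2 _ injf)); last by move=> z /setDP[_ ?]; rewrite inE.
  exact/subset_leq_card/imsetS/subsetDl.
by rewrite (leq_trans (subset_leq_card (subsetIr _ _))) // cards2; case: (_ != _).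
Qed.

End ImageCounting.

Lemma disjoint_set2 (T : finType) (a b c d : T) :
  [disjoint [set a; b] & [set c; d]] = [&& a != c, a != d, b != c & b != d].
Proof. by rewrite disjoints_subset subUset !sub1set !inE !negb_or !andbA. Qed.

Lemma card_set3_le (T : finType) (x y z : T) : #|[set x; y; z]| <= 3.
Proof.
apply: leq_trans (leq_card_setU _ _) _; rewrite cards1 addn1 ltnS.
by apply: leq_trans (leq_card_setU _ _) _; rewrite !cards1.
Qed.

Section FibresMeet.
Variables (I C : finType).

Definition fibres_meet (f g : I -> C) : Prop :=
  forall i j k l, i != j -> k != l -> f i = f j -> g k = g l ->
    ~~ [disjoint [set i; j] & [set k; l]].

Lemma fibres_meet_sym f g : fibres_meet f g -> fibres_meet g f.
Proof. by move=> fg i j k l nij nkl gij fkl; rewrite disjoint_sym fg. Qed.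

Lemma fibres_meet_injective f g x y :
  fibres_meet f g -> x != y -> f x = f y -> {in ~: [set x; y] &, injective g}.
Proof.
move=> fg nxy fxy u v; rewrite !inE !negb_or => /andP[nux nuy] /andP[nvx nvy] guv.
apply/eqP/negPn/negP => nuv; move: (fg _ _ _ _ nxy nuv fxy guv).
by rewrite disjoint_set2 !(eq_sym x) !(eq_sym y) nux nuy nvx nvy.
Qed.

End FibresMeet.

Section ConstantTriple.
Variables (I C : finType) (cL cR : I -> C).
Hypothesis cLR_neq : forall i j, i != j -> cL i != cR j.
Hypothesis cLR_meet : fibres_meet cL cR.

Let D := [set i | cL i == cR i].
Let N := ~: D.

Lemma cLR_eq i j : cL i = cR j -> i = j.
Proof. by move=> eij; apply/eqP/negPn/negP => /cLR_neq; rewrite eij eqxx. Qed.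

Lemma card_palette_split :
  #|D| + #|cL @: N| + #|cR @: N| <= #|cL @: [set: I] :|: cR @: [set: I]|.
Proof.
have disj_DN : [disjoint cL @: D & cL @: N].
  rewrite -setI_eq0; apply/eqP/setP => c; rewrite !inE.
  apply/negbTE/andP => -[/imsetP[i Di ->] /imsetP[j Nj]]; move: Di Nj; rewrite !inE.
  move=> /eqP Di Nj eij; have eji := cLR_eq (etrans (esym eij) Di).
  by rewrite eji Di eqxx in Nj.
have disj_LR : [disjoint cL @: [set: I] & cR @: N].
  rewrite -setI_eq0; apply/eqP/setP => c; rewrite !inE.
  apply/negbTE/andP => -[/imsetP[i _ ->] /imsetP[j Nj eij]].
  by move: Nj; rewrite !inE -{1}(cLR_eq eij) eij eqxx.
have card_D : #|cL @: D| = #|D|.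
  apply: card_in_imset => i j _; rewrite inE => /eqP Dj eij.
  by apply: cLR_eq; rewrite eij.
have setT_DN : [set: I] = D :|: N by rewrite setUCr.
have card_L : #|cL @: D :|: cL @: N| = #|cL @: D| + #|cL @: N|.
  by apply/eqP; rewrite (leq_card_setU _ _).2.
have card_LR : #|cL @: [set: I] :|: cR @: N| = #|cL @: [set: I]| + #|cR @: N|.
  by apply/eqP; rewrite (leq_card_setU _ _).2.
rewrite -card_D -card_L -imsetU -setT_DN -card_LR.
by apply/subset_leq_card/setUS/imsetS/subsetT.
Qed.

Lemma constant_triple :
  #|cL @: [set: I] :|: cR @: [set: I]| < #|I| ->
  exists x y z, [/\ x != y, y != z, z != x,
    cL x = cL y /\ cL y = cL z & cR x = cR y /\ cR y = cR z].
Proof.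
move=> few_colors.
have card_DN : #|D| + #|N| = #|I| by rewrite cardsC.
have key : #|cL @: N| + #|cR @: N| < #|N|.
  by have := card_palette_split; lia.
have [x [y [Nx Ny nxy cLxy]]] := exists_collision (leq_ltn_trans (leq_addr _ _) key).
have [k [l [Nk Nl nkl cRkl]]] := exists_collision (leq_ltn_trans (leq_addl _ _) key).
(* A monochromatic pair on one side makes the other side injective off that pair. *)
have boundR := card_le_imset_add2 N (fibres_meet_injective cLR_meet nxy cLxy).
have boundL := card_le_imset_add2 N
  (fibres_meet_injective (fibres_meet_sym cLR_meet) nkl cRkl).
have imL_gt0 : 0 < #|cL @: N| by apply/card_gt0P; exists (cL x); apply: imset_f.
have imR_gt0 : 0 < #|cR @: N| by apply/card_gt0P; exists (cR x); apply: imset_f.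
have /card_le1_eqP constL : #|cL @: N| <= 1 by lia.
have /card_le1_eqP constR : #|cR @: N| <= 1 by lia.
have /card_gt2P[a [b [c [[Na Nb Nc] [nab nbc nca]]]]] : 2 < #|N| by lia.
exists a, b, c; split=> //; split.
- by apply: constL; apply: imset_f.
- by apply: constL; apply: imset_f.
- by apply: constR; apply: imset_f.
- by apply: constR; apply: imset_f.
Qed.

End ConstantTriple.

Section Colourings.
Variables (T : finType) (L : {set {set T}}).

Lemma vertices_full : f0 L = #|T| -> forall v, v \in vertices L.
Proof.
move=> fullL v; have card_vertices : #|vertices L| = #|[set: T]| by rewrite cardsT.
by rewrite (elimT (subset_cardP card_vertices) (subsetT _)) inE.
Qed.

Lemma colorable_card : colorable L #|T|.
Proof.
apply/existsP; exists [ffun v => Some (enum_rank v)]; apply/andP; split.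
  by apply/forallP => v; apply/implyP; rewrite ffunE.
apply/forallP => u; apply/forallP => v; apply/implyP => /and4P[_ _ nuv _].
by rewrite !ffunE; apply: contra nuv => /eqP[/enum_rank_inj->].
Qed.

Lemma colorable_chromatic_number : colorable L (chromatic_number L).
Proof.
have has_col : has (colorable L) (iota 0 #|T|.+1).
  by apply/hasP; exists #|T|; [rewrite mem_iota /= | exact: colorable_card].
have lt_find : find (colorable L) (iota 0 #|T|.+1) < #|T|.+1.
  by rewrite -[X in _ < X](size_iota 0) -has_find.
by have := nth_find 0 has_col; rewrite nth_iota.
Qed.

Lemma colorable_proper k : colorable L k -> (forall v, v \in vertices L) ->
  exists c : T -> option 'I_k, (forall v, c v != None) /\
    forall u v, u != v -> [set u; v] \in L -> c u != c v.
Proof.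
move=> /existsP[c /andP[/forallP c_total /forallP c_proper]] all_vertices.
exists c; split=> [v | u v nuv Luv]; first by have := c_total v; rewrite all_vertices.
by have /forallP/(_ v) := c_proper u; rewrite !all_vertices nuv Luv.
Qed.

End Colourings.

Section Bier.
Variables (m : nat) (K : {set {set 'I_m}}).
Hypothesis K_complex : is_complex K.
Hypothesis K_proper : K != full_simplex m.

Lemma complex_sub (I J : {set 'I_m}) : I \in K -> J \subset I -> J \in K.
Proof. by case: K_complex => _; apply. Qed.

Lemma set0_in_complex : set0 \in K.
Proof. by case: K_complex => /set0Pn[I KI] _; apply: complex_sub KI (sub0set I). Qed.

Lemma setT_notin_complex : [set: 'I_m] \notin K.
Proof.
apply: contra K_proper => KT; apply/eqP/setP => I.
by rewrite /full_simplex inE (complex_sub KT (subsetT I)).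
Qed.

Lemma complex_disjoint_compl (A B : {set 'I_m}) :
  ~: A \in K -> [disjoint B & A] -> B \in K.
Proof. by rewrite disjoints_subset => KA; apply: complex_sub. Qed.

Lemma in_alex_dual (J : {set 'I_m}) : (J \in alex_dual K) = (~: J \notin K).
Proof. by rewrite inE. Qed.

Lemma mem_bier (I J : {set 'I_m}) : I \in K -> J \in alex_dual K -> [disjoint I & J] ->
  inl @: I :|: inr @: J \in bier K.
Proof. by move=> KI KJ dIJ; apply/imset2P; exists I J; rewrite // inE KJ. Qed.

Lemma bier_edge_inl_inr i j : [set i] \in K -> [set j] \in alex_dual K -> i != j ->
  [set inl i; inr j] \in bier K.
Proof.
move=> Ki Kj nij; rewrite -!imset_set1; apply: mem_bier => //.
by rewrite disjoints1 inE.
Qed.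

Lemma bier_edge_inl i j : [set i; j] \in K -> [set inl i; inl j] \in bier K.
Proof.
move=> Kij; rewrite -[X in X \in _]setU0 -(imset0 inr) -!imset_set1 -imsetU.
by apply: mem_bier; rewrite ?in_alex_dual ?setC0 ?setT_notin_complex // -setI_eq0 setI0.
Qed.

Lemma bier_edge_inr i j : [set i; j] \in alex_dual K -> [set inr i; inr j] \in bier K.
Proof.
move=> Kij; rewrite -[X in X \in _]set0U -(imset0 inl) -!imset_set1 -imsetU.
by apply: mem_bier; rewrite ?set0_in_complex // -setI_eq0 set0I.
Qed.

Lemma bier_nonedge_diag i : [set inl i; inr i] \notin bier K.
Proof.
apply/imset2P => -[I J _]; rewrite inE => /andP[_ dIJ] /setP eqIJ.
have := eqIJ (inl i); have := eqIJ (inr i); rewrite !inE !eqxx /=.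
move=> /esym/orP[/imsetP[? _] // | /imsetP[j Jj [->]]].
move=> /esym/orP[/imsetP[k Ik [eik]] | /imsetP[? _] //].
by move: dIJ; rewrite -setI_eq0 => /eqP/setP/(_ k); rewrite !inE Ik -eik Jj.
Qed.

Section ProperColouring.
Variables (C : finType) (c : 'I_m + 'I_m -> C).
Hypothesis K_vertices : forall i, [set i] \in K.
Hypothesis dual_vertices : forall i, [set i] \in alex_dual K.
Hypothesis c_proper : forall u v, u != v -> [set u; v] \in bier K -> c u != c v.

Lemma bier_vertices v : v \in vertices (bier K).
Proof.
rewrite inE -[[set v]]setUid.
by case: v => i; [apply: bier_edge_inl | apply: bier_edge_inr]; rewrite setUid.
Qed.

Lemma color_inl_inr_neq i j : i != j -> c (inl i) != c (inr j).
Proof. by move=> nij; apply: c_proper => //; apply: bier_edge_inl_inr. Qed.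

Lemma pair_notin_of_color_inl i j : i != j -> c (inl i) = c (inl j) ->
  [set i; j] \notin K.
Proof.
move=> nij cij; apply: contraTN (eqxx (c (inl i))) => Kij.
by rewrite [X in _ != X]cij c_proper ?bier_edge_inl // inj_eq.
Qed.

Lemma compl_pair_in_of_color_inr i j : i != j -> c (inr i) = c (inr j) ->
  ~: [set i; j] \in K.
Proof.
move=> nij cij; apply: contraTT (eqxx (c (inr i))); rewrite -in_alex_dual => Kij.
by rewrite [X in _ != X]cij c_proper ?bier_edge_inr // inj_eq.
Qed.

Lemma color_fibres_meet : fibres_meet (c \o inl) (c \o inr).
Proof.
move=> i j k l nij nkl /= cij ckl; apply: contra (pair_notin_of_color_inl nij cij).
exact/complex_disjoint_compl/compl_pair_in_of_color_inr.
Qed.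

Lemma pair_in_of_disjoint_monochromatic u v i j : u != v ->
  c (inl u) = c (inl v) -> c (inr u) = c (inr v) ->
  [disjoint [set u; v] & [set i; j]] ->
  [set i; j] \in K /\ [set i; j] \in alex_dual K.
Proof.
move=> nuv cLuv cRuv duv; split.
  apply: complex_disjoint_compl (compl_pair_in_of_color_inr nuv cRuv) _.
  by rewrite disjoint_sym.
rewrite in_alex_dual; apply: contra (pair_notin_of_color_inl nuv cLuv) => Kij.
exact: complex_disjoint_compl Kij duv.
Qed.

Lemma weak_suspension_of_monochromatic_triple x y z i :
  x != y -> y != z -> z != x ->
  c (inl x) = c (inl y) -> c (inl y) = c (inl z) ->
  c (inr x) = c (inr y) -> c (inr y) = c (inr z) ->
  i \notin [set x; y; z] -> weak_suspension (bier K).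
Proof.
move=> nxy nyz nzx cLxy cLyz cRxy cRyz; rewrite !inE !negb_or => /andP[/andP[nix niy] niz].
have bier_pair j : j != i -> [set i; j] \in K /\ [set i; j] \in alex_dual K.
  move=> nji; have [-> | njx] := eqVneq j x.
    by apply: (pair_in_of_disjoint_monochromatic nyz cLyz cRyz);
      rewrite disjoint_set2 !(eq_sym _ i) niy niz eq_sym nxy.
  have [-> | njy] := eqVneq j y.
    have cLzx : c (inl z) = c (inl x) by rewrite cLxy cLyz.
    have cRzx : c (inr z) = c (inr x) by rewrite cRxy cRyz.
    apply: (pair_in_of_disjoint_monochromatic nzx cLzx cRzx).
    by rewrite disjoint_set2 !(eq_sym _ i) niz nix nxy eq_sym nyz.
  by apply: (pair_in_of_disjoint_monochromatic nxy cLxy cRxy);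
    rewrite disjoint_set2 !(eq_sym _ i) nix niy !(eq_sym _ j) njx njy.
exists (inl i), (inr i); split; rewrite ?bier_vertices ?bier_nonedge_diag //.
case=> j _.
  rewrite (inj_eq inl_inj) => nji _; have [Kij _] := bier_pair j nji.
  by rewrite bier_edge_inl // setUC bier_edge_inl_inr.
rewrite (inj_eq inr_inj) => _ nji; have [_ Dij] := bier_pair j nji.
by rewrite bier_edge_inr // bier_edge_inl_inr // eq_sym.
Qed.

End ProperColouring.

End Bier.

Theorem mainTheorem8 (m : nat) (K : {set {set 'I_m}}) :
  4 <= m ->
  is_complex K ->
  K != full_simplex m ->
  f0 K = m ->
  f0 (alex_dual K) = m ->
  chromatic_number (bier K) = m - 1 ->
  weak_suspension (bier K).
Proof.
move=> m_ge4 K_complex K_proper f0K f0D chi.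
have K_vertices i : [set i] \in K.
  by have := vertices_full (etrans f0K (esym (card_ord m))) i; rewrite inE.
have dual_vertices i : [set i] \in alex_dual K.
  by have := vertices_full (etrans f0D (esym (card_ord m))) i; rewrite inE.
have all_vertices := bier_vertices K_complex K_proper K_vertices dual_vertices.
have [c [c_total c_proper]] :=
  colorable_proper (colorable_chromatic_number (bier K)) all_vertices.
rewrite {}chi in c c_total c_proper.
have few_colors : #|(c \o inl) @: [set: 'I_m] :|: (c \o inr) @: [set: 'I_m]| < #|'I_m|.
  apply: leq_ltn_trans (subset_leq_card (_ : _ \subset [set~ None])) _.
    by apply/subsetP => _ /setUP[] /imsetP[i _ ->]; rewrite !inE c_total.
  by rewrite cardsC1 card_option !card_ord; lia.
have [x [y [z [nxy nyz nzx [cLxy cLyz] [cRxy cRyz]]]]] :=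
  constant_triple (color_inl_inr_neq K_vertices dual_vertices c_proper)
    (color_fibres_meet K_complex K_proper c_proper) few_colors.
have /subsetPn[i _ not_xyz] : ~~ ([set: 'I_m] \subset [set x; y; z]).
  apply: contraTN m_ge4 => /subset_leq_card; rewrite cardsT card_ord => le_m3.
  by rewrite -leqNgt (leq_trans le_m3) ?card_set3_le.
exact: (weak_suspension_of_monochromatic_triple K_complex K_proper K_vertices dual_vertices
  c_proper nxy nyz nzx cLxy cLyz cRxy cRyz not_xyz).
Qed.
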